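(* Let $(A,+,\circ)$ be a finite skew brace. The following are equivalent: (i) $A$ is a $*$-nilpotent skew brace of nilpotent type; (ii) $A$ is a right $*$-nilpotent skew brace of nilpotent type and $(A,\circ)$ is nilpotent; (iii) $A$ is centrally nilpotent.
   Context: A skew brace is a triple $(A,+,\circ)$ where $(A,+)$ and $(A,\circ)$ are groups (not necessarily abelian; $+$ is written additively) such that $x\circ(y+z)=(x\circ y)-x+(x\circ z)$ for all $x,y,z\in A$; the common neutral element is $0$. It is of nilpotent type if $(A,+)$ is nilpotent. Let $\lambda_x(y)=-x+(x\circ y)$ and $x*y=\lambda_x(y)-y$; $[x,y]_+=x+y-x-y$. For subsets $X,Y$, $X*Y$ is the subgroup of $(A,+)$ generated by $\{x*y\}$. Left and right series: $A^1=A$, $A^{n+1}=A*A^n$; $A^{(1)}=A$, $A^{(n+1)}=A^{(n)}*A$. $A$ is left (resp. right) $*$-nilpotent if $A^n=0$ (resp. $A^{(n)}=0$) for some $n$, and $*$-nilpotent if both. An ideal is a subgroup $I$ of $(A,+)$ with $\lambda_a(I)\subseteq I$ for all $a\in A$ that is normal in both $(A,+)$ and $(A,\circ)$. The center is $\zeta(A)=\{x\in A: x*y=y*x=[x,y]_+=0\ \forall y\in A\}$. $A$ is centrally nilpotent if there is a chain of ideals $0=I_0\leq\dots\leq I_n=A$ with $I_{j+1}/I_j\leq\zeta(A/I_j)$ for all $j$. *)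

From mathcomp Require Import all_boot.
Set Implicit Arguments. Unset Strict Implicit. Unset Printing Implicit Defensive.

Section Groups.
Variable T : finType.

Definition is_group (op : T -> T -> T) (inv : T -> T) (e : T) : Prop :=
  [/\ (forall x y w, op x (op y w) = op (op x y) w),
      (forall x, op e x = x), (forall x, op x e = x),
      (forall x, op (inv x) x = e) & (forall x, op x (inv x) = e)].

Definition is_subgrp (op : T -> T -> T) (inv : T -> T) (e : T) (H : {set T}) : bool :=
  [&& e \in H, [forall x in H, forall y in H, op x y \in H]
   & [forall x in H, inv x \in H]].

Definition gen_grp op inv e (X : {set T}) : {set T} :=
  \bigcap_(H : {set T} | is_subgrp op inv e H && (X \subset H)) H.

Definition grp_comm (op : T -> T -> T) (inv : T -> T) x y :=
  op (op (op x y) (inv x)) (inv y).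

Fixpoint lcs op inv e (n : nat) : {set T} :=
  if n is m.+1 then
    gen_grp op inv e [set grp_comm op inv x y | x in [set: T], y in lcs op inv e m]
  else [set: T].

Definition nilpotent_grp op inv e : Prop := exists n, lcs op inv e n = [set e].
End Groups.

Section SkewBrace.
Variables (T : finType) (add : T -> T -> T) (opp : T -> T) (z : T)
          (circ : T -> T -> T) (cinv : T -> T).

Definition skew_brace : Prop :=
  [/\ is_group add opp z, is_group circ cinv z &
      forall x y w, circ x (add y w) = add (add (circ x y) (opp x)) (circ x w)].

Definition lam x y := add (opp x) (circ x y).
Definition star x y := add (lam x y) (opp y).
Definition comm_add x y := grp_comm add opp x y.

Definition starset (X Y : {set T}) : {set T} :=
  gen_grp add opp z [set star x y | x in X, y in Y].

(* left series: lser n = A^(n+1) ; right series: rser n = A^((n+1)) *)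
Fixpoint lser (n : nat) : {set T} :=
  if n is m.+1 then starset [set: T] (lser m) else [set: T].
Fixpoint rser (n : nat) : {set T} :=
  if n is m.+1 then starset (rser m) [set: T] else [set: T].

Definition left_star_nilpotent : Prop := exists n, lser n = [set z].
Definition right_star_nilpotent : Prop := exists n, rser n = [set z].
Definition star_nilpotent : Prop := left_star_nilpotent /\ right_star_nilpotent.

Definition nilpotent_type : Prop := nilpotent_grp add opp z.

Definition ideal (I : {set T}) : Prop :=
  [/\ is_subgrp add opp z I,
      (forall a x, x \in I -> lam a x \in I),
      (forall a x, x \in I -> add (add a x) (opp a) \in I),
      is_subgrp circ cinv z I &
      (forall a x, x \in I -> circ (circ a x) (cinv a) \in I)].

(* x + J lies in the center of A/J  (J an ideal), written out:
   x*y, y*x, [x,y]_+ all lie in J for every y *)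
Definition central_mod (J : {set T}) (x : T) : Prop :=
  forall y, [/\ star x y \in J, star y x \in J & comm_add x y \in J].

Definition centrally_nilpotent : Prop :=
  exists (n : nat) (I : nat -> {set T}),
    [/\ I 0 = [set z], I n = [set: T],
        (forall j, j <= n -> ideal (I j)),
        (forall j, j < n -> I j \subset I j.+1) &
        (forall j, j < n -> forall x, x \in I j.+1 -> central_mod (I j) x)].
End SkewBrace.

(* (iii) => (i), (ii): a central chain 0 = I_0 <= ... <= I_n = A pushes the
   k-th term of each of the four series A^k, A^(k), gamma_k(A,+) and
   gamma_k(A,o) into I_(n-k), so all of them reach 0.

   (i) => (iii) and (ii) => (iii): we reason modulo an ideal J through the
   congruence a == b <-> -a + b \in J, which is compatible with +, o and
   lambda.  The center Z(A mod J) = {x | x*y, y*x, [x,y]_+ \in J for all y}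
   is an ideal containing J, so iterating it gives an upper central series;
   by finiteness it suffices that Z(A mod J) strictly contains J whenever
   J <> A.  Right *-nilpotency (the A^(k) are ideals) together with the
   nilpotency of (A,+) provides x \notin J with lambda_x == id and x
   additively central modulo J.  Such elements form a set closed under all
   the brace operations; cutting it down along the left series (case (i))
   or along gamma_k(A,o) (case (ii)) yields an element of Z(A mod J) \ J. *)
From mathcomp Require Import all_boot.
Set Implicit Arguments. Unset Strict Implicit. Unset Printing Implicit Defensive.

Lemma subgrpP (T : finType) (op : T -> T -> T) inv e (H : {set T}) :
  reflect [/\ e \in H, (forall x y, x \in H -> y \in H -> op x y \in H)
            & (forall x, x \in H -> inv x \in H)] (is_subgrp op inv e H).
Proof.
apply: (iffP and3P) => [[He /forall_inP Hop /forall_inP Hinv]|[He Hop Hinv]].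
  split=> // x y xH yH; have /forall_inP := Hop x xH; exact.
split=> //; apply/forall_inP => x xH //; first apply/forall_inP => y yH; auto.
Qed.

Lemma subgrp_eq1 (T : finType) (op : T -> T -> T) inv e (X : {set T}) :
  is_subgrp op inv e X -> X \subset [set e] -> X = [set e].
Proof. by case/subgrpP=> Xe _ _ sub; apply/eqP; rewrite eqEsubset sub sub1set. Qed.

Section Group.
Variables (T : finType) (op : T -> T -> T) (inv : T -> T) (e : T).
Hypothesis G : is_group op inv e.

Lemma opA x y w : op x (op y w) = op (op x y) w. Proof. by case: G. Qed.
Lemma op1l x : op e x = x. Proof. by case: G. Qed.
Lemma op1r x : op x e = x. Proof. by case: G. Qed.
Lemma opVl x : op (inv x) x = e. Proof. by case: G. Qed.
Lemma opVr x : op x (inv x) = e. Proof. by case: G. Qed.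

Lemma opKl x y : op (inv x) (op x y) = y.
Proof. by rewrite opA opVl op1l. Qed.
Lemma opKVl x y : op x (op (inv x) y) = y.
Proof. by rewrite opA opVr op1l. Qed.
Lemma opKr x y : op (op y x) (inv x) = y.
Proof. by rewrite -opA opVr op1r. Qed.
Lemma opKVr x y : op (op y (inv x)) x = y.
Proof. by rewrite -opA opVl op1r. Qed.
Lemma inv_uniq x y : op x y = e -> inv x = y.
Proof. by move=> h; rewrite -[inv x]op1r -h opKl. Qed.
Lemma inv_uniql x y : op x y = e -> x = inv y.
Proof. by move=> h; rewrite -[inv y]op1l -h opKr. Qed.
Lemma invK x : inv (inv x) = x.
Proof. by apply: inv_uniq; rewrite opVl. Qed.
Lemma inv1 : inv e = e.
Proof. by apply: inv_uniq; rewrite op1l. Qed.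
Lemma inv_op x y : inv (op x y) = op (inv y) (inv x).
Proof. by apply: inv_uniq; rewrite opA opKr opVr. Qed.

Lemma inv_grp_comm x y : inv (grp_comm op inv x y) = grp_comm op inv y x.
Proof. by rewrite /grp_comm !inv_op !invK !opA. Qed.

Lemma subgrpT : is_subgrp op inv e [set: T].
Proof. by apply/subgrpP; split=> *; rewrite inE. Qed.

Lemma subgrp1 : is_subgrp op inv e [set e].
Proof.
apply/subgrpP; split; first by rewrite inE.
  by move=> x y /set1P-> /set1P->; rewrite op1l inE.
by move=> x /set1P->; rewrite inv1 inE.
Qed.

Lemma subgrp_preim (f : T -> T) (H : {set T}) : is_subgrp op inv e H ->
  f e = e -> (forall x y, f (op x y) = op (f x) (f y)) ->
  (forall x, f (inv x) = inv (f x)) -> is_subgrp op inv e [set x | f x \in H].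
Proof.
case/subgrpP=> He Hop Hinv f1 fM fV; apply/subgrpP; split; rewrite ?inE ?f1 //.
  by move=> x y; rewrite !inE fM; apply: Hop.
by move=> x; rewrite !inE fV; apply: Hinv.
Qed.

Lemma gen_subgrp (X : {set T}) : is_subgrp op inv e (gen_grp op inv e X).
Proof.
apply/subgrpP; split.
- by apply/bigcapP => H /andP[/subgrpP[]].
- move=> x y /bigcapP xH /bigcapP yH; apply/bigcapP => H HH.
  by case/andP: (HH) => /subgrpP[_ Hop _] _; apply: Hop; auto.
- move=> x /bigcapP xH; apply/bigcapP => H HH.
  by case/andP: (HH) => /subgrpP[_ _ Hinv] _; apply: Hinv; auto.
Qed.

Lemma mem_gen (X : {set T}) x : x \in X -> x \in gen_grp op inv e X.
Proof. by move=> xX; apply/bigcapP => H /andP[_ /subsetP]; apply. Qed.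

Lemma gen_min (X H : {set T}) : is_subgrp op inv e H -> X \subset H ->
  gen_grp op inv e X \subset H.
Proof. by move=> sH XH; apply/subsetP => x /bigcapP; apply; rewrite sH. Qed.

Lemma gen_stable (f : T -> T) (X : {set T}) :
  f e = e -> (forall x y, f (op x y) = op (f x) (f y)) ->
  (forall x, f (inv x) = inv (f x)) ->
  (forall x, x \in X -> f x \in gen_grp op inv e X) ->
  forall u, u \in gen_grp op inv e X -> f u \in gen_grp op inv e X.
Proof.
move=> f1 fM fV fX.
have sub : gen_grp op inv e X \subset [set u | f u \in gen_grp op inv e X].
  apply: gen_min; first exact: subgrp_preim (gen_subgrp X) f1 fM fV.
  by apply/subsetP => x xX; rewrite inE fX.
by move=> u /(subsetP sub); rewrite inE.
Qed.

Lemma lcs_subgrp m : is_subgrp op inv e (lcs op inv e m).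
Proof. by case: m => [|m] /=; [apply: subgrpT | apply: gen_subgrp]. Qed.

Lemma mem_lcs_comm m x y :
  x \in lcs op inv e m -> grp_comm op inv x y \in lcs op inv e m.+1.
Proof.
move=> xl; rewrite -inv_grp_comm; case/subgrpP: (lcs_subgrp m.+1) => _ _; apply.
by rewrite /= mem_gen //; apply/imset2P; exists y x; rewrite ?inE.
Qed.

End Group.

Section Series.
Variable T : finType.

Lemma last_escape_level (S : nat -> {set T}) (X J : {set T}) n :
  S 0 = [set: T] -> S n \subset J -> ~~ (X \subset J) ->
  exists k, ~~ (X :&: S k \subset J) /\ X :&: S k.+1 \subset J.
Proof.
move=> S0 SnJ XJ; have : X :&: S n \subset J by apply: subset_trans (subsetIr _ _) SnJ.
elim: n {SnJ} => [|n IH]; first by rewrite S0 setIT (negbTE XJ).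
by move=> sub; case: (boolP (X :&: S n \subset J)) => [/IH//|nsub]; exists n.
Qed.

Lemma descend_chain (X I : nat -> {set T}) n : X 0 \subset I n ->
  (forall k j, j < n -> X k \subset I j.+1 -> X k.+1 \subset I j) ->
  X n \subset I 0.
Proof.
move=> X0 step; suff h k : k <= n -> X k \subset I (n - k) by rewrite -(subnn n) h.
elim: k => [|k IH] kn; first by rewrite subn0.
apply: step; first by rewrite ltn_subrL (leq_ltn_trans (leq0n k) kn).
by rewrite subnSK //; apply: IH; apply: ltnW.
Qed.

End Series.

Section Brace.
Variables (T : finType) (add : T -> T -> T) (opp : T -> T) (z : T)
          (circ : T -> T -> T) (cinv : T -> T).
Hypothesis HA : skew_brace add opp z circ cinv.

Let GA : is_group add opp z. Proof. by case: HA. Qed.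
Let GC : is_group circ cinv z. Proof. by case: HA. Qed.
Let distr x y w : circ x (add y w) = add (add (circ x y) (opp x)) (circ x w).
Proof. by case: HA. Qed.

Local Notation "x ⊕ y" := (add x y) (at level 50, left associativity).
Local Notation "x ⊙ y" := (circ x y) (at level 40, left associativity).
Local Notation lam := (lam add opp circ).
Local Notation star := (star add opp circ).
Local Notation comm := (comm_add add opp).
Local Notation ideal := (ideal add opp z circ cinv).
Local Notation starset := (starset add opp z circ).
Local Notation rser := (rser add opp z circ).
Local Notation lser := (lser add opp z circ).

Lemma lamE x y : lam x y = opp x ⊕ (x ⊙ y). Proof. by []. Qed.
Lemma circE x y : x ⊙ y = x ⊕ lam x y. Proof. by rewrite lamE (opKVl GA). Qed.
Lemma starE x y : star x y = lam x y ⊕ opp y. Proof. by []. Qed.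
Lemma commE x y : comm x y = x ⊕ y ⊕ opp (y ⊕ x).
Proof. by rewrite /comm_add /grp_comm (inv_op GA) !(opA GA). Qed.

Lemma lam_add x y w : lam x (y ⊕ w) = lam x y ⊕ lam x w.
Proof. by rewrite !lamE distr -!(opA GA). Qed.
Lemma lam_z x : lam x z = z.
Proof. by rewrite lamE (op1r GC) (opVl GA). Qed.
Lemma lam_opp x y : lam x (opp y) = opp (lam x y).
Proof. by symmetry; apply: (inv_uniq GA); rewrite -lam_add (opVr GA) lam_z. Qed.
Lemma lam1 y : lam z y = y.
Proof. by rewrite lamE (op1l GC) (inv1 GA) (op1l GA). Qed.
Lemma lam_circ x y w : lam (x ⊙ y) w = lam x (lam y w).
Proof.
rewrite [lam y w]lamE lam_add lam_opp [lam x y]lamE [lam x (y ⊙ w)]lamE.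
by rewrite (inv_op GA) (invK GA) -(opA GA) (opKVl GA) (opA GC).
Qed.
Lemma lamK x y : lam x (lam (cinv x) y) = y.
Proof. by rewrite -lam_circ (opVr GC) lam1. Qed.
Lemma lamKV x y : lam (cinv x) (lam x y) = y.
Proof. by rewrite -lam_circ (opVl GC) lam1. Qed.
Lemma lam_cinv x : lam x (cinv x) = opp x.
Proof. by rewrite lamE (opVr GC) (op1r GA). Qed.
Lemma cinvE x : cinv x = opp (lam (cinv x) x).
Proof. by apply: (inv_uniql GA); rewrite -circE (opVl GC). Qed.

Lemma ideal1 : ideal [set z].
Proof.
split; first exact: subgrp1.
- by move=> a x /set1P->; rewrite lam_z inE.
- by move=> a x /set1P->; rewrite (op1r GA) (opVr GA) inE.
- exact: subgrp1.
- by move=> a x /set1P->; rewrite (op1r GC) (opVr GC) inE.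
Qed.

Lemma idealT : ideal [set: T].
Proof. by split; try exact: subgrpT; move=> *; rewrite inE. Qed.

Lemma mem_starset (X Y : {set T}) x y :
  x \in X -> y \in Y -> star x y \in starset X Y.
Proof. by move=> xX yY; apply: mem_gen; apply/imset2P; exists x y. Qed.

Lemma starset_subgrp (X Y : {set T}) : is_subgrp add opp z (starset X Y).
Proof. exact: gen_subgrp. Qed.

Lemma rser_subgrp n : is_subgrp add opp z (rser n).
Proof. by case: n => [|n]; [apply: subgrpT | apply: starset_subgrp]. Qed.
Lemma lser_subgrp n : is_subgrp add opp z (lser n).
Proof. by case: n => [|n]; [apply: subgrpT | apply: starset_subgrp]. Qed.

(* Since J is a
   normal subgroup of both groups and lambda-invariant, this relation is a
   congruence for +, o, lambda (in both arguments), and the inverses. *)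
Section Congruence.
Variable J : {set T}.
Hypothesis HJ : ideal J.

Let Jz : z \in J. Proof. by case: HJ => /subgrpP[]. Qed.
Let Jadd x y : x \in J -> y \in J -> x ⊕ y \in J.
Proof. by case: HJ => /subgrpP[_ h _] _ _ _ _; apply: h. Qed.
Let Jopp x : x \in J -> opp x \in J.
Proof. by case: HJ => /subgrpP[_ _ h] _ _ _ _; apply: h. Qed.
Let Jlam a x : x \in J -> lam a x \in J.
Proof. by case: HJ => _ h _ _ _; apply: h. Qed.
Let Jconj a x : x \in J -> a ⊕ x ⊕ opp a \in J.
Proof. by case: HJ => _ _ h _ _; apply: h. Qed.
Let Jcconj a x : x \in J -> a ⊙ x ⊙ cinv a \in J.
Proof. by case: HJ => _ _ _ _ h; apply: h. Qed.

Definition cong a b := opp a ⊕ b \in J.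
Local Notation "a ≡ b" := (cong a b) (at level 70).

Lemma mem_ideal_conj a x : (a ⊕ x ⊕ opp a \in J) = (x \in J).
Proof.
apply/idP/idP => [h|]; last exact: Jconj.
have := Jconj (opp a) h.
by rewrite (invK GA) !(opA GA) (opVl GA) (op1l GA) (opKVr GA).
Qed.

Lemma mem_ideal_swap u v : (u ⊕ opp v \in J) = (opp v ⊕ u \in J).
Proof. by rewrite -[RHS](mem_ideal_conj v) (opKVl GA). Qed.

Lemma congP a b : a ≡ b -> exists2 j, j \in J & b = a ⊕ j.
Proof. by move=> h; exists (opp a ⊕ b) => //; rewrite (opKVl GA). Qed.
Lemma cong_addJ a j : j \in J -> a ≡ a ⊕ j.
Proof. by rewrite /cong (opKl GA). Qed.
Lemma cong_Jadd a j : j \in J -> a ≡ j ⊕ a.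
Proof.
by move=> h; rewrite /cong (opA GA); have := Jconj (opp a) h; rewrite (invK GA).
Qed.
Lemma cong_zJ j : j \in J -> z ≡ j.
Proof. by move=> h; rewrite /cong (inv1 GA) (op1l GA). Qed.

Lemma cong_refl a : a ≡ a. Proof. by rewrite /cong (opVl GA). Qed.
Lemma cong_sym a b : a ≡ b -> b ≡ a.
Proof. by move=> h; have := Jopp h; rewrite (inv_op GA) (invK GA). Qed.
Lemma cong_trans b a c : a ≡ b -> b ≡ c -> a ≡ c.
Proof. by move=> h1 h2; have := Jadd h1 h2; rewrite -(opA GA) (opKVl GA). Qed.

Lemma cong_addl c a b : a ≡ b -> c ⊕ a ≡ c ⊕ b.
Proof. by rewrite /cong (inv_op GA) -(opA GA) (opKl GA). Qed.
Lemma cong_addlK c a b : c ⊕ a ≡ c ⊕ b -> a ≡ b.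
Proof. by rewrite /cong (inv_op GA) -(opA GA) (opKl GA). Qed.
Lemma cong_addr c a b : a ≡ b -> a ⊕ c ≡ b ⊕ c.
Proof.
by move=> h; have := Jconj (opp c) h; rewrite /cong (invK GA) (inv_op GA) !(opA GA).
Qed.
Lemma cong_add a b c d : a ≡ b -> c ≡ d -> a ⊕ c ≡ b ⊕ d.
Proof. by move=> h1 h2; apply: (cong_trans (cong_addr c h1)); apply: cong_addl. Qed.
Lemma cong_opp a b : a ≡ b -> opp a ≡ opp b.
Proof.
case/congP=> j jJ ->; rewrite /cong (invK GA) (inv_op GA) (opA GA).
exact: Jconj (Jopp jJ).
Qed.

Lemma cong_lamr c a b : a ≡ b -> lam c a ≡ lam c b.
Proof. by case/congP=> j jJ ->; rewrite lam_add; apply: cong_addJ; apply: Jlam. Qed.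
Lemma cong_circr c a b : a ≡ b -> c ⊙ a ≡ c ⊙ b.
Proof. by move=> h; rewrite !circE; apply: cong_addl; apply: cong_lamr. Qed.
Lemma cong_circJ a j : j \in J -> a ≡ a ⊙ j.
Proof. by move=> h; rewrite circE; apply: cong_addJ; apply: Jlam. Qed.

Lemma congPc a b : a ≡ b -> exists2 j, j \in J & b = a ⊙ j.
Proof.
move=> h; exists (lam (cinv a) (opp a ⊕ b)); first exact: Jlam.
by rewrite circE lamK (opKVl GA).
Qed.

(* Elements of J act trivially modulo J; this is where the normality of J
   in (A,o) is used. *)
Lemma cong_lamJ j y : j \in J -> y ≡ lam j y.
Proof.
move=> jJ; have j'J : cinv y ⊙ j ⊙ y \in J.
  by have := Jcconj (cinv y) jJ; rewrite (invK GC).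
have -> : lam j y = opp j ⊕ (y ⊙ (cinv y ⊙ j ⊙ y)).
  by rewrite lamE !(opA GC) (opVr GC) (op1l GC).
apply: (cong_trans (cong_Jadd y (Jopp jJ))); apply: cong_addl; exact: cong_circJ.
Qed.

Lemma cong_laml w a b : a ≡ b -> lam a w ≡ lam b w.
Proof.
by case/congPc=> j jJ ->; rewrite lam_circ; apply: cong_lamr; apply: cong_lamJ.
Qed.

Lemma cong_circ_div u v : v ≡ u -> u ⊙ cinv v \in J.
Proof. by case/congPc=> j jJ ->; apply: Jcconj. Qed.
Lemma cong_of_circ u v : u ⊙ cinv v \in J -> v ≡ u.
Proof.
move=> h; have h' := Jcconj (cinv v) h; rewrite (invK GC) in h'.
by have := cong_circJ v h'; rewrite !(opA GC) (opVr GC) (op1l GC) (opKVr GC).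
Qed.

Lemma mem_star_cong x y : (star x y \in J) = (y ≡ lam x y).
Proof. by rewrite starE mem_ideal_swap. Qed.
Lemma mem_comm_cong x y : (comm x y \in J) = (y ⊕ x ≡ x ⊕ y).
Proof. by rewrite commE mem_ideal_swap. Qed.

(* The three conditions defining the center modulo J, read as congruences:
   x acts trivially (x*y \in J), x is lambda-fixed (y*x \in J), and x is
   additively central ([x,y]_+ \in J). *)
Definition lam_trivial x := forall y, y ≡ lam x y.
Definition lam_fixed x := forall y, x ≡ lam y x.
Definition add_central x := forall y, y ⊕ x ≡ x ⊕ y.

Lemma lam_trivial_cong x x' : x ≡ x' -> lam_trivial x -> lam_trivial x'.
Proof. by move=> h L y; apply: (cong_trans (L y)); apply: cong_laml. Qed.
Lemma lam_fixed_cong x x' : x ≡ x' -> lam_fixed x -> lam_fixed x'.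
Proof.
move=> h F y; apply: (cong_trans (cong_sym h)); apply: (cong_trans (F y)).
exact: cong_lamr.
Qed.
Lemma add_central_cong x x' : x ≡ x' -> add_central x -> add_central x'.
Proof.
move=> h C y; apply: (cong_trans (cong_addl y (cong_sym h))).
by apply: (cong_trans (C y)); apply: cong_addr.
Qed.

Lemma lam_trivial_z : lam_trivial z.
Proof. by move=> y; rewrite lam1; apply: cong_refl. Qed.
Lemma lam_fixed_z : lam_fixed z.
Proof. by move=> y; rewrite lam_z; apply: cong_refl. Qed.
Lemma add_central_z : add_central z.
Proof. by move=> y; rewrite (op1l GA) (op1r GA); apply: cong_refl. Qed.

Lemma lam_trivial_circ_add x x' : lam_trivial x -> x ⊕ x' ≡ x ⊙ x'.
Proof. by move=> L; rewrite circE; apply: cong_addl; apply: L. Qed.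

Lemma lam_trivial_circ x x' : lam_trivial x -> lam_trivial x' -> lam_trivial (x ⊙ x').
Proof. by move=> L L' y; rewrite lam_circ; apply: (cong_trans (L' y)); apply: L. Qed.
Lemma lam_trivial_add x x' : lam_trivial x -> lam_trivial x' -> lam_trivial (x ⊕ x').
Proof.
move=> L L'; apply: (lam_trivial_cong (cong_sym (lam_trivial_circ_add x' L))).
exact: lam_trivial_circ.
Qed.
Lemma lam_trivial_cinv x : lam_trivial x -> lam_trivial (cinv x).
Proof. by move=> L y; have := L (lam (cinv x) y); rewrite lamK; apply: cong_sym. Qed.
Lemma lam_trivial_cinv_opp x : lam_trivial x -> cinv x ≡ opp x.
Proof.
move=> L; rewrite [X in X ≡ _]cinvE; apply: cong_sym; apply: cong_opp.
exact: (lam_trivial_cinv L).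
Qed.
Lemma lam_trivial_opp x : lam_trivial x -> lam_trivial (opp x).
Proof.
by move=> L; apply: (lam_trivial_cong (lam_trivial_cinv_opp L)); apply: lam_trivial_cinv.
Qed.
Lemma lam_trivial_conj g x : lam_trivial x -> lam_trivial (g ⊙ x ⊙ cinv g).
Proof.
move=> L y; rewrite !lam_circ; apply: (@cong_trans (lam g (lam (cinv g) y))).
  by rewrite lamK; apply: cong_refl.
by apply: cong_lamr; apply: L.
Qed.

Lemma add_central_add x x' : add_central x -> add_central x' -> add_central (x ⊕ x').
Proof.
move=> C C' y; rewrite (opA GA); apply: (cong_trans (cong_addr x' (C y))).
by rewrite -!(opA GA); apply: cong_addl; apply: C'.
Qed.
Lemma add_central_opp x : add_central x -> add_central (opp x).
Proof.
move=> C y; apply: cong_sym; have := cong_opp (C (opp y)).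
by rewrite !(inv_op GA) (invK GA).
Qed.
Lemma add_central_lam g x : add_central x -> add_central (lam g x).
Proof.
by move=> C y; rewrite -[y](lamK g) -!lam_add; apply: cong_lamr; apply: C.
Qed.

Lemma lam_fixed_add x x' : lam_fixed x -> lam_fixed x' -> lam_fixed (x ⊕ x').
Proof. by move=> F F' y; rewrite lam_add; apply: cong_add. Qed.
Lemma lam_fixed_opp x : lam_fixed x -> lam_fixed (opp x).
Proof. by move=> F y; rewrite lam_opp; apply: cong_opp. Qed.

Lemma cong_conj_lam g x : lam_trivial x -> add_central x ->
  g ⊙ x ⊙ cinv g ≡ lam g x.
Proof.
move=> L C; rewrite -(opA GC).
have h : g ⊙ (x ⊙ cinv g) ≡ g ⊙ (x ⊕ cinv g).
  by apply: cong_circr; apply: cong_sym; apply: lam_trivial_circ_add.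
apply: (cong_trans h); rewrite circE lam_add lam_cinv (opA GA).
by have := cong_addr (opp g) (add_central_lam g C g); rewrite (opKr GA).
Qed.

Lemma lam_trivial_lam g x : lam_trivial x -> add_central x -> lam_trivial (lam g x).
Proof.
move=> L C; apply: (lam_trivial_cong (cong_conj_lam g L C)).
exact: lam_trivial_conj.
Qed.

(* The center of A modulo J, i.e. the preimage of the center of A/J. *)
Definition Zmod := [set x | [forall y, [&& star x y \in J, star y x \in J
                                        & comm x y \in J]]].

Lemma ZmodP x : reflect [/\ lam_trivial x, lam_fixed x & add_central x] (x \in Zmod).
Proof.
rewrite inE; apply: (iffP forallP) => [h|[L F C] y].
  by split=> y; have /and3P[h1 h2 h3] := h y;
     rewrite -?mem_star_cong -?mem_comm_cong.
by rewrite !mem_star_cong mem_comm_cong L F C.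
Qed.

Lemma Zmod_central_mod x : x \in Zmod -> central_mod add opp circ J x.
Proof. by rewrite inE => /forallP h y; have /and3P[] := h y. Qed.

Lemma Zmod_cong x x' : x ≡ x' -> x \in Zmod -> x' \in Zmod.
Proof.
move=> h /ZmodP[L F C]; apply/ZmodP; split.
- exact: lam_trivial_cong L.
- exact: lam_fixed_cong F.
- exact: add_central_cong C.
Qed.

Lemma Zmod_z : z \in Zmod.
Proof.
by apply/ZmodP; split; [apply: lam_trivial_z | apply: lam_fixed_z | apply: add_central_z].
Qed.

Lemma ideal_sub_Zmod : J \subset Zmod.
Proof. by apply/subsetP => j jJ; apply: (Zmod_cong (cong_zJ jJ)); apply: Zmod_z. Qed.

Lemma Zmod_add x x' : x \in Zmod -> x' \in Zmod -> x ⊕ x' \in Zmod.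
Proof.
move=> /ZmodP[L F C] /ZmodP[L' F' C']; apply/ZmodP; split.
- exact: lam_trivial_add.
- exact: lam_fixed_add.
- exact: add_central_add.
Qed.
Lemma Zmod_opp x : x \in Zmod -> opp x \in Zmod.
Proof.
move=> /ZmodP[L F C]; apply/ZmodP; split.
- exact: lam_trivial_opp.
- exact: lam_fixed_opp.
- exact: add_central_opp.
Qed.

Lemma Zmod_ideal : ideal Zmod.
Proof.
split.
- by apply/subgrpP; split; [exact: Zmod_z | exact: Zmod_add | exact: Zmod_opp].
- by move=> a x xZ; apply: (Zmod_cong _ xZ); case/ZmodP: xZ => _ F _; apply: F.
- move=> a x xZ; apply: (Zmod_cong _ xZ); case/ZmodP: xZ => _ _ C.
  by apply: cong_sym; have := cong_addr (opp a) (C a); rewrite (opKr GA).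
- apply/subgrpP; split; first exact: Zmod_z.
  + move=> x x' xZ x'Z; apply: (Zmod_cong _ (Zmod_add xZ x'Z)).
    by case/ZmodP: xZ => L _ _; apply: lam_trivial_circ_add.
  + move=> x xZ; apply: (Zmod_cong _ (Zmod_opp xZ)); apply: cong_sym.
    by case/ZmodP: xZ => L _ _; apply: lam_trivial_cinv_opp.
- move=> a x xZ; apply: (Zmod_cong _ xZ); case/ZmodP: xZ => L F C.
  by apply: cong_sym; apply: (cong_trans (cong_conj_lam a L C)); apply: cong_sym.
Qed.

Lemma central_mod_circ_comm x y : central_mod add opp circ J y ->
  grp_comm circ cinv x y \in J.
Proof.
move=> cen; have [h1 h2 h3] := cen x.
have -> : grp_comm circ cinv x y = (x ⊙ y) ⊙ cinv (y ⊙ x).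
  by rewrite (inv_op GC) /grp_comm !(opA GC).
apply: cong_circ_div; rewrite !circE.
rewrite mem_star_cong in h1; rewrite mem_star_cong in h2; rewrite mem_comm_cong in h3.
apply: (cong_trans (cong_sym (cong_addl y h1))).
by apply: (cong_trans (cong_sym h3)); apply: cong_addl.
Qed.

End Congruence.

Lemma conj_z a : a ⊕ z ⊕ opp a = z.
Proof. by rewrite (op1r GA) (opVr GA). Qed.
Lemma conj_add a u v :
  a ⊕ (u ⊕ v) ⊕ opp a = (a ⊕ u ⊕ opp a) ⊕ (a ⊕ v ⊕ opp a).
Proof. by rewrite !(opA GA) (opKVr GA). Qed.
Lemma conj_opp a u : a ⊕ opp u ⊕ opp a = opp (a ⊕ u ⊕ opp a).
Proof. by rewrite !(inv_op GA) (invK GA) (opA GA). Qed.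

Lemma lam_star a x y : lam a (star x y) = star (a ⊙ x ⊙ cinv a) (lam a y).
Proof. by rewrite !starE lam_add lam_opp !lam_circ lamKV. Qed.
Lemma conj_star a x y : a ⊕ star x y ⊕ opp a = opp (star x a) ⊕ star x (a ⊕ y).
Proof.
rewrite !starE lam_add [opp (lam x a ⊕ _)](inv_op GA) (invK GA).
rewrite [opp (a ⊕ y)](inv_op GA); move: (lam x a) (lam x y) => u v.
by rewrite !(opA GA) (opKVr GA).
Qed.

Section RightSeries.
Variable J : {set T}.
Hypothesis HJ : ideal J.
Local Notation K := (starset J [set: T]).

Lemma starset_sub_ideal : K \subset J.
Proof.
have [JS _ _ _ _] := HJ; apply: (gen_min JS).
by apply/subsetP => _ /imset2P[x y xJ _ ->]; rewrite mem_star_cong //; apply: cong_lamJ.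
Qed.

Lemma starset_lam a u : u \in K -> lam a u \in K.
Proof.
move: u; apply: (gen_stable (lam_z a) (lam_add a) (lam_opp a)).
move=> _ /imset2P[x y xJ _ ->].
rewrite lam_star; apply: mem_starset; last by rewrite inE.
by case: HJ => _ _ _ _; apply.
Qed.

Lemma starset_conj a u : u \in K -> a ⊕ u ⊕ opp a \in K.
Proof.
move: u; apply: (gen_stable (conj_z a) (conj_add a) (conj_opp a)).
move=> _ /imset2P[x y xJ _ ->].
case/subgrpP: (starset_subgrp J [set: T]) => _ Kadd Kopp.
by rewrite conj_star; apply: Kadd; [apply: Kopp |]; apply: mem_starset; rewrite ?inE.
Qed.

Lemma starset_ideal : ideal K.
Proof.
have KS := starset_subgrp J [set: T]; case/subgrpP: (KS) => Kz Kadd Kopp.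
have KsT u y : u \in K -> star u y \in K.
  by move=> uK; apply: mem_starset; rewrite ?inE // (subsetP starset_sub_ideal).
split=> //; [exact: starset_lam | exact: starset_conj | |].
- apply/subgrpP; split=> //.
  + by move=> u v uK vK; rewrite circE; apply: Kadd => //; apply: starset_lam.
  + by move=> u uK; rewrite cinvE; apply: Kopp; apply: starset_lam.
- move=> a u uK.
  have -> : a ⊙ u ⊙ cinv a = a ⊕ (lam a u ⊕ lam a (star u (cinv a))) ⊕ opp a.
    rewrite -(opA GC) circE [u ⊙ _]circE.
    have -> : lam u (cinv a) = star u (cinv a) ⊕ cinv a by rewrite starE (opKVr GA).
    by rewrite !lam_add lam_cinv !(opA GA).
  by apply: starset_conj; apply: Kadd; apply: starset_lam => //; apply: KsT.
Qed.

End RightSeries.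

Lemma rser_ideal k : ideal (rser k).
Proof. by elim: k => [|k IH] /=; [exact: idealT | exact: starset_ideal]. Qed.

Section CentralElement.
Variable J : {set T}.
Hypothesis HJ : ideal J.
Let Jz : z \in J. Proof. by case: HJ => /subgrpP[]. Qed.
Local Notation "a ≡ b" := (cong J a b) (at level 70).

Definition lamcent :=
  [set s | [forall y, y ≡ lam s y] && [forall y, y ⊕ s ≡ s ⊕ y]].

Lemma lamcentP s : reflect (lam_trivial J s /\ add_central J s) (s \in lamcent).
Proof.
by rewrite inE; apply: (iffP andP) => [[/forallP h1 /forallP h2]|[h1 h2]];
   split=> //; apply/forallP.
Qed.

Lemma lamcent_add s t : s \in lamcent -> t \in lamcent -> s ⊕ t \in lamcent.
Proof.
case/lamcentP=> L C /lamcentP[L' C']; apply/lamcentP.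
by split; [apply: lam_trivial_add | apply: add_central_add].
Qed.
Lemma lamcent_opp s : s \in lamcent -> opp s \in lamcent.
Proof.
case/lamcentP=> L C; apply/lamcentP.
by split; [apply: lam_trivial_opp | apply: add_central_opp].
Qed.
Lemma lamcent_circ s t : s \in lamcent -> t \in lamcent -> s ⊙ t \in lamcent.
Proof.
case/lamcentP=> L C /lamcentP[L' C']; apply/lamcentP; split.
  exact: lam_trivial_circ.
exact (add_central_cong HJ (lam_trivial_circ_add t L) (add_central_add HJ C C')).
Qed.
Lemma lamcent_cinv s : s \in lamcent -> cinv s \in lamcent.
Proof.
case/lamcentP=> L C; apply/lamcentP; split; first exact: lam_trivial_cinv.
have cinv_opp := cong_sym HJ (lam_trivial_cinv_opp HJ L).
exact (add_central_cong HJ cinv_opp (add_central_opp HJ C)).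
Qed.
Lemma lamcent_lam g s : s \in lamcent -> lam g s \in lamcent.
Proof.
case/lamcentP=> L C; apply/lamcentP.
by split; [apply: lam_trivial_lam | apply: add_central_lam].
Qed.
Lemma lamcent_conj g s : s \in lamcent -> g ⊙ s ⊙ cinv g \in lamcent.
Proof.
case/lamcentP=> L C; apply/lamcentP; split; first exact: lam_trivial_conj.
have conj_lam := cong_sym HJ (cong_conj_lam HJ g L C).
exact (add_central_cong HJ conj_lam (add_central_lam HJ g C)).
Qed.

(* Right *-nilpotency and nilpotency of (A,+) produce an element of
   lamcent outside J: take x in A^(k) :&: gamma_m(A,+) \ J with k, m
   maximal, so that A^(k) * A and [A^(k) :&: gamma_m, A] lie in J. *)
Lemma exists_lamcent nr na : rser nr = [set z] -> lcs add opp z na = [set z] ->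
  ~~ ([set: T] \subset J) -> exists2 x, x \notin J & x \in lamcent.
Proof.
move=> Hr Ha TJ.
have RJ : rser nr \subset J by rewrite Hr sub1set.
have [k [Rk Rk1]] := last_escape_level (S := rser) erefl RJ TJ.
rewrite setTI in Rk; rewrite setTI in Rk1.
have AJ : lcs add opp z na \subset J by rewrite Ha sub1set.
have [m [Pm Pm1]] := last_escape_level (S := lcs add opp z) erefl AJ Rk.
case/subsetPn: Pm => x /setIP[xR xl] xJ; exists x => //; apply/lamcentP; split.
  move=> y; rewrite -mem_star_cong //; apply: (subsetP Rk1).
  exact: mem_starset xR (in_setT y).
move=> y; rewrite -mem_comm_cong //; apply: (subsetP Pm1); apply/setIP; split.
  have -> : comm x y = x ⊕ (y ⊕ opp x ⊕ opp y).
    by rewrite /comm_add /grp_comm !(opA GA).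
  have [/subgrpP[_ Radd Ropp] _ Rconj _ _] := rser_ideal k.
  by apply: (Radd _ _ xR); apply: Rconj; apply: Ropp.
exact: mem_lcs_comm.
Qed.

(* Case (i): the left series cuts lamcent down to Zmod J. *)
Lemma Zmod_escape_left nr na nl : rser nr = [set z] ->
  lcs add opp z na = [set z] -> lser nl = [set z] ->
  ~~ ([set: T] \subset J) -> exists2 s, s \notin J & s \in Zmod J.
Proof.
move=> Hr Ha Hl TJ; have [x xJ xS] := exists_lamcent Hr Ha TJ.
have LJ : lser nl \subset J by rewrite Hl sub1set.
have SJ : ~~ (lamcent \subset J) by apply/subsetPn; exists x.
have [p [Pp Pp1]] := last_escape_level (S := lser) erefl LJ SJ.
case/subsetPn: Pp => s /setIP[sS sl] sJ; exists s => //.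
have /lamcentP[L C] := sS; apply/(ZmodP HJ); split=> // g.
rewrite -mem_star_cong //; apply: (subsetP Pp1); apply/setIP; split.
  by rewrite starE; apply: lamcent_add; [apply: lamcent_lam | apply: lamcent_opp].
exact: mem_starset (in_setT g) sl.
Qed.

(* Case (ii): the lower central series of (A,o) cuts lamcent down to
   Zmod J, since o-commutation modulo J of an element of lamcent with g
   amounts to g * s \in J. *)
Lemma Zmod_escape_circ nr na nc : rser nr = [set z] ->
  lcs add opp z na = [set z] -> lcs circ cinv z nc = [set z] ->
  ~~ ([set: T] \subset J) -> exists2 s, s \notin J & s \in Zmod J.
Proof.
move=> Hr Ha Hc TJ; have [x xJ xS] := exists_lamcent Hr Ha TJ.
have CJ : lcs circ cinv z nc \subset J by rewrite Hc sub1set.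
have SJ : ~~ (lamcent \subset J) by apply/subsetPn; exists x.
have [p [Pp Pp1]] := last_escape_level (S := lcs circ cinv z) erefl CJ SJ.
case/subsetPn: Pp => s /setIP[sS sl] sJ; exists s => //.
have /lamcentP[L C] := sS; apply/(ZmodP HJ); split=> // g.
have commJ : grp_comm circ cinv s g \in J.
  apply: (subsetP Pp1); apply/setIP; split; last exact: mem_lcs_comm.
  have -> : grp_comm circ cinv s g = s ⊙ (g ⊙ cinv s ⊙ cinv g).
    by rewrite /grp_comm !(opA GC).
  by apply: lamcent_circ => //; apply: lamcent_conj; apply: lamcent_cinv.
have gs_sg : g ⊙ s ≡ s ⊙ g.
  by apply: (cong_of_circ HJ); rewrite (inv_op GC) !(opA GC).
have : g ⊕ lam g s ≡ g ⊕ s.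
  rewrite -circE; apply: (cong_trans HJ gs_sg); rewrite circE.
  by apply: (cong_trans HJ (cong_sym HJ (cong_addl s (L g)))); apply: cong_sym.
by move/cong_addlK; apply: cong_sym.
Qed.

End CentralElement.

Fixpoint upper_central k := if k is m.+1 then Zmod (upper_central m) else [set z].

Lemma upper_central_ideal k : ideal (upper_central k).
Proof. by elim: k => [|k IH] /=; [exact: ideal1 | exact: Zmod_ideal]. Qed.

Section UpperCentral.
Hypothesis Zmod_escape : forall J, ideal J -> ~~ ([set: T] \subset J) ->
  exists2 s, s \notin J & s \in Zmod J.

Lemma upper_central_grows k : upper_central k = [set: T] \/ k < #|upper_central k|.
Proof.
elim: k => [|k IH]; first by right; rewrite /= cards1.
have HZ := upper_central_ideal k; have sub := ideal_sub_Zmod HZ.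
case: (boolP ([set: T] \subset upper_central k)) => [sT|nsT].
  by left; apply/eqP; rewrite eqEsubset subsetT (subset_trans sT sub).
case: IH => [E|lt]; first by rewrite E subxx in nsT.
right; have [s sn sZ] := Zmod_escape HZ nsT.
by apply: (leq_ltn_trans lt); apply: proper_card; apply/properP; split; last exists s.
Qed.

Lemma centrally_nilpotent_of_escape : centrally_nilpotent add opp z circ cinv.
Proof.
exists #|T|, upper_central; split=> //.
- case: (upper_central_grows #|T|) => // lt; exfalso.
  by have := max_card (mem (upper_central #|T|)); rewrite leqNgt lt.
- by move=> j _; apply: upper_central_ideal.
- by move=> j _; apply: ideal_sub_Zmod (upper_central_ideal j).
- by move=> j _ x; apply: Zmod_central_mod.
Qed.

End UpperCentral.

Section CentralStep.
Variables J K Y : {set T}.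
Hypothesis HJ : ideal J.
Hypothesis K_central : forall y, y \in K -> central_mod add opp circ J y.
Hypothesis YK : Y \subset K.
Let JS : is_subgrp add opp z J. Proof. by case: HJ. Qed.

Lemma lser_step : starset [set: T] Y \subset J.
Proof.
apply: gen_min JS _; apply/subsetP => _ /imset2P[x y _ yY ->].
by have [] := K_central (subsetP YK y yY) x.
Qed.

Lemma rser_step : starset Y [set: T] \subset J.
Proof.
apply: gen_min JS _; apply/subsetP => _ /imset2P[x y xY _ ->].
by have [] := K_central (subsetP YK x xY) y.
Qed.

Lemma lcs_add_step :
  gen_grp add opp z [set comm x y | x in [set: T], y in Y] \subset J.
Proof.
apply: gen_min JS _; apply/subsetP => _ /imset2P[x y _ yY ->].
have [_ _ h] := K_central (subsetP YK y yY) x.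
by rewrite /comm_add -(inv_grp_comm GA); case/subgrpP: JS => _ _; apply.
Qed.

Lemma lcs_circ_step :
  gen_grp circ cinv z [set grp_comm circ cinv x y | x in [set: T], y in Y] \subset J.
Proof.
have [_ _ _ JSc _] := HJ; apply: gen_min JSc _.
apply/subsetP => _ /imset2P[x y _ yY ->].
exact: (central_mod_circ_comm HJ x (K_central (subsetP YK y yY))).
Qed.

End CentralStep.

Lemma centrally_nilpotent_series : centrally_nilpotent add opp z circ cinv ->
  [/\ left_star_nilpotent add opp z circ, right_star_nilpotent add opp z circ,
      nilpotent_type add opp z & nilpotent_grp circ cinv z].
Proof.
case=> n [I [I0 In Iid Isub Icen]].
have vanish (op : T -> T -> T) inv (X : nat -> {set T}) :
    is_subgrp op inv z (X n) -> X 0 = [set: T] ->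
    (forall k j, ideal (I j) ->
       (forall y, y \in I j.+1 -> central_mod add opp circ (I j) y) ->
       X k \subset I j.+1 -> X k.+1 \subset I j) ->
    X n = [set z].
  move=> Xn X0 step; apply: subgrp_eq1 Xn _; rewrite -I0.
  apply: descend_chain => [|k j jn]; first by rewrite X0 In.
  by apply: step; [apply: Iid; apply: ltnW | apply: Icen].
split; exists n.
- by apply: vanish (lser_subgrp n) _ _ => // k j; apply: lser_step.
- by apply: vanish (rser_subgrp n) _ _ => // k j; apply: rser_step.
- by apply: vanish (lcs_subgrp add opp z n) _ _ => // k j; apply: lcs_add_step.
- by apply: vanish (lcs_subgrp circ cinv z n) _ _ => // k j; apply: lcs_circ_step.
Qed.

End Brace.

Theorem mainTheorem8 (T : finType) (add : T -> T -> T) (opp : T -> T) (z : T)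
    (circ : T -> T -> T) (cinv : T -> T)
    (HA : skew_brace add opp z circ cinv) :
  ((star_nilpotent add opp z circ /\ nilpotent_type add opp z) <->
   (right_star_nilpotent add opp z circ /\ nilpotent_type add opp z
    /\ nilpotent_grp circ cinv z)) /\
  ((right_star_nilpotent add opp z circ /\ nilpotent_type add opp z
    /\ nilpotent_grp circ cinv z) <->
   centrally_nilpotent add opp z circ cinv).
Proof.
have i_iii : star_nilpotent add opp z circ /\ nilpotent_type add opp z ->
             centrally_nilpotent add opp z circ cinv.
  case=> [[[nl Hl] [nr Hr]] [na Ha]]; apply: (centrally_nilpotent_of_escape HA).
  by move=> J HJ; apply: (Zmod_escape_left HA HJ Hr Ha Hl).
have ii_iii : right_star_nilpotent add opp z circ /\ nilpotent_type add opp z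
              /\ nilpotent_grp circ cinv z -> centrally_nilpotent add opp z circ cinv.
  case=> [[nr Hr] [[na Ha] [nc Hc]]]; apply: (centrally_nilpotent_of_escape HA).
  by move=> J HJ; apply: (Zmod_escape_circ HA HJ Hr Ha Hc).
have iii_all := centrally_nilpotent_series HA.
split; split.
- by move/i_iii/iii_all => [].
- by move/ii_iii/iii_all => [].
- exact: ii_iii.
- by move/iii_all => [].
Qed.
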